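(* Let $d\le3$. For all $E>0$ and $\tau\in[0,4-d)$ there exists a constant $C_{E,\tau}$, uniformly bounded for $E$ in compact subsets of $(0,\infty)$, such that for all $L\ge1$ and all $\eta>0$, $$\int_{\Lambda_L^*}\frac{\langle a\rangle^\tau}{|a^2-E-i\eta|^2}da\le C_{E,\tau}(1+\eta^{-2}).$$
   Context: $\Lambda_L=[-L/2,L/2)^d$, $\Lambda_L^*=(\frac1L\mathbb Z)^d$, $\int_{\Lambda_L^*}g(a)da:=|\Lambda_L|^{-1}\sum_{a\in\Lambda_L^*}g(a)$; $a^2=|a|^2$ and $\langle a\rangle=(1+|a|^2)^{1/2}$. *)

From HB Require Import structures.
From mathcomp Require Import all_boot all_order all_algebra.
From mathcomp Require Import all_classical all_reals all_analysis.
Set Implicit Arguments. Unset Strict Implicit. Unset Printing Implicit Defensive.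
Import Order.TTheory GRing.Theory Num.Theory.
Local Open Scope ring_scope.
Local Open Scope classical_set_scope.

(* A point of the dual lattice Lambda_L^* = (Z/L)^d is a = k / L with k in Z^d. *)
Definition latsq (R : realType) (d : nat) (L : R) (k : {ffun 'I_d -> int}) : R :=
  \sum_(i < d) ((k i)%:~R / L) ^+ 2.

(* The integrand  <a>^tau / |a^2 - E - i eta|^2,  with
   <a>^tau = (1 + |a|^2)^(tau/2)  and  |x + i y|^2 = x^2 + y^2. *)
Definition integrand (R : realType) (d : nat) (L E eta tau : R)
    (k : {ffun 'I_d -> int}) : R :=
  (1 + latsq L k) `^ (tau / 2) / ((latsq L k - E) ^+ 2 + eta ^+ 2).

(* \int_{Lambda_L^*} g(a) da := |Lambda_L|^{-1} sum_{a in Lambda_L^*} g(a),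
   |Lambda_L| = L^d; the (possibly infinite) sum of nonnegative terms is the
   extended-real valued esum. *)
Definition lat_integral (R : realType) (d : nat) (L E eta tau : R) : \bar R :=
  ((L ^+ d)^-1)%:E *
  (\esum_(k in [set: {ffun 'I_d -> int}]) (integrand L E eta tau k)%:E)%E.

From mathcomp Require Import all_boot all_order all_algebra.
From mathcomp Require Import all_classical all_reals all_analysis.
From mathcomp Require Import ring lra zify.
Import Order.TTheory GRing.Theory Num.Theory.
Set Implicit Arguments.
Unset Strict Implicit.
Local Open Scope ring_scope.

(* The denominator |a^2 - E - i eta|^2 = (a^2 - E)^2 + eta^2 is at least
   c_E^-1 (1 + eta^-2)^-1 <a>^4, so the integrand is at most
   c_E (1 + eta^-2) <a>^(-2s) with s = 2 - tau/2.  Since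
   <a>^(-2s) <= prod_i <a_i>^(-2s/d), every finite part of the lattice sum is
   dominated by a product of d one-dimensional sums
   sum_(j in Z) <j/L>^(-2t), t = s/d, and such a sum is O(L) as soon as
   2t > 1, which is exactly tau < 4 - d: comparing (1 + m/L)^(-2t) with the
   increments of (1 + m/L)^(1-2t) makes it telescope.  The resulting factor
   L^d cancels the normalisation |Lambda_L|^-1. *)

Lemma sum_sym_int_le (R : numDomainType) (f : int -> R) (N : nat) :
  (forall m, 0 <= f m) -> (forall m, f (- m) = f m) ->
  \sum_(j < N.+1 + N) f (j%:Z - N%:Z) <= 2 * \sum_(m < N.+1) f m%:Z.
Proof.
move=> f_ge0 fN.
have sum_low : \sum_(j < N.+1) f (j%:Z - N%:Z) = \sum_(m < N.+1) f m%:Z.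
  rewrite (reindex_inj rev_ord_inj); apply: eq_bigr => i _.
  by rewrite -fN opprB /=; congr f; have := ltn_ord i; lia.
have sum_high : \sum_(j < N) f ((N.+1 + j)%:Z - N%:Z) = \sum_(m < N) f m.+1%:Z.
  by apply: eq_bigr => i _; congr f; lia.
rewrite big_split_ord /= sum_low sum_high mulr2n mulrDl mul1r lerD2l.
by rewrite big_ord_recl lerDr.
Qed.

(* Expanding the d-th power gives the sum over the whole box [-N, N]^d, which
   contains the distinct points of s. *)
Lemma sum_prod_le_box (R : numDomainType) (d N : nat) (f : int -> R)
    (s : seq {ffun 'I_d -> int}) :
  (forall j, 0 <= f j) -> uniq s ->
  (forall k, k \in s -> forall i, (`|k i| <= N)%N) ->
  \sum_(k <- s) \prod_(i < d) f (k i) <=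
    (\sum_(j < N.+1 + N) f (j%:Z - N%:Z)) ^+ d.
Proof.
move=> f_ge0 s_uniq s_bounded.
rewrite -[X in _ ^+ X](card_ord d) -prodr_const.
rewrite (bigA_distr_bigA
  (fun (i : 'I_d) (j : 'I_(N.+1 + N)) => f (j%:Z - N%:Z))).
pose box (k : {ffun 'I_d -> int}) : {ffun 'I_d -> 'I_(N.+1 + N)} :=
  [ffun i => inord `|k i + N%:Z|].
have box_lt (m : int) : (`|m| <= N)%N -> (`|(m + N%:Z)%R| < N.+1 + N)%N.
  by case: m => x; rewrite ?NegzE; lia.
have boxK : forall k, k \in s -> forall i, (box k i)%:Z - N%:Z = k i.
  move=> k ks i; have bound := s_bounded k ks i.
  rewrite /box ffunE inordK; last exact: box_lt.
  by move: bound; case: (k i) => x; rewrite ?NegzE; lia.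
rewrite (eq_big_seq (fun k => \prod_(i < d) f ((box k i)%:Z - N%:Z))); last first.
  by move=> k ks; apply: eq_bigr => i _; rewrite boxK.
rewrite -(big_map box xpredT (fun g => \prod_(i < d) f ((g i)%:Z - N%:Z))).
have box_uniq : uniq (map box s).
  rewrite map_inj_in_uniq // => k1 k2 k1s k2s box_eq.
  by apply/ffunP => i; rewrite -boxK // box_eq boxK.
rewrite big_uniq // [leRHS](bigID (mem (map box s))) /= lerDl.
by apply: sumr_ge0 => g _; apply: prodr_ge0.
Qed.

Lemma seq_ffun_bounded (d : nat) (s : seq {ffun 'I_d -> int}) :
  exists N, (forall k, k \in s -> forall i, (`|k i| <= N)%N).
Proof.
exists (\max_(k <- s) \max_(i < d) `|k i|%N) => k ks i.
apply: leq_trans (leq_bigmax_seq _ ks isT).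
exact: (leq_bigmax_cond i).
Qed.

Section DecaySums.
Variable R : realType.

Lemma powRB1_ge {q v : R} : 0 < q -> 0 <= v -> v * (1 - q^-1) <= q `^ v - 1.
Proof.
move=> q_gt0 v_ge0.
have ln_ge : 1 - q^-1 <= ln q.
  have qV_gt0 : 0 < q^-1 by rewrite invr_gt0.
  have : -1 < q^-1 - 1 by lra.
  move=> /le_ln1Dx; rewrite addrCA subrr addr0 lnV ?posrE //; lra.
have := expR_ge1Dx (v * ln q); rewrite /powR gt_eqF //.
have : v * (1 - q^-1) <= v * ln q by rewrite ler_wpM2l.
lra.
Qed.

(* The discrete form of  int_z^y v x^(-v-1) dx = z^(-v) - y^(-v). *)
Lemma powRV_subr_ge {y z v : R} : 0 < z -> z <= y -> 0 <= v ->
  v * (y - z) / y `^ (v + 1) <= (z `^ v)^-1 - (y `^ v)^-1.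
Proof.
move=> z_gt0 zy v_ge0.
have y_gt0 : 0 < y by lra.
have yz_gt0 : 0 < y / z by apply: divr_gt0.
have bern := powRB1_ge yz_gt0 v_ge0.
have Q_gt0 : 0 < (y / z) `^ v by apply: powR_gt0.
have Z_gt0 : 0 < z `^ v by apply: powR_gt0.
have y_split : y `^ v = (y / z) `^ v * z `^ v.
  by rewrite -powRM ?divfK ?gt_eqF //; lra.
rewrite powRD ?(gt_eqF y_gt0) ?implybT // (powRr1 (ltW y_gt0)).
rewrite y_split.
move: ((y / z) `^ v) (z `^ v) bern Q_gt0 Z_gt0 => Q Z bern Q_gt0 Z_gt0.
have -> : v * (y - z) / (Q * Z * y) = v * (1 - (y / z)^-1) / (Q * Z).
  by field; rewrite !gt_eqF.
have -> : Z^-1 - (Q * Z)^-1 = (Q - 1) / (Q * Z) by field; rewrite !gt_eqF.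
by rewrite ler_pM2r ?invr_gt0 ?mulr_gt0.
Qed.

Lemma sum_powRV_le (L v : R) (N : nat) : 0 < L -> 0 < v ->
  \sum_(m < N.+1) ((1 + m%:R / L) `^ (v + 1))^-1 <= 1 + L / v.
Proof.
move=> L_gt0 v_gt0.
have mL_ge0 (m : nat) : 0 <= m%:R / L by rewrite divr_ge0 // ltW.
pose g (m : nat) := ((1 + m%:R / L) `^ v)^-1.
have step m : ((1 + m.+1%:R / L) `^ (v + 1))^-1 <= L / v * (g m - g m.+1).
  have z_gt0 : 0 < 1 + m%:R / L by have := mL_ge0 m; lra.
  have zy : 1 + m%:R / L <= 1 + m.+1%:R / L.
    by rewrite lerD2l ler_pM2r ?invr_gt0 // ler_nat.
  have := powRV_subr_ge z_gt0 zy (ltW v_gt0).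
  have -> : 1 + m.+1%:R / L - (1 + m%:R / L) = L^-1.
    by rewrite -natr1; field; rewrite gt_eqF.
  have : 0 < (1 + m.+1%:R / L) `^ (v + 1).
    by apply: powR_gt0; have := mL_ge0 m.+1; lra.
  move: ((1 + m.+1%:R / L) `^ (v + 1)) => P P_gt0 tele.
  have -> : P^-1 = L / v * (v * L^-1 / P) by field; rewrite !gt_eqF.
  by rewrite ler_pM2l ?divr_gt0.
rewrite big_ord_recl /= mul0r addr0 powR1 invr1 lerD2l.
apply: (@le_trans _ _ (\sum_(m < N) L / v * (g m - g m.+1))).
  by apply: ler_sum => m _; exact: step.
rewrite -mulr_sumr ler_piMr ?divr_ge0 ?(ltW L_gt0) ?(ltW v_gt0) //.
have -> : \sum_(m < N) (g m - g m.+1) = g 0%N - g N.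
  rewrite -(big_mkord xpredT (fun m => g m - g m.+1)) -[RHS]opprB.
  rewrite -telescope_sumr // -sumrN.
  by apply: eq_bigr => m _; rewrite opprB.
by rewrite /g mul0r addr0 powR1 invr1 gerBl invr_ge0 powR_ge0.
Qed.

Definition decay (t x : R) := ((1 + x ^+ 2) `^ t)^-1.

Lemma decay_ge0 (t x : R) : 0 <= decay t x.
Proof. by rewrite invr_ge0 powR_ge0. Qed.

Lemma decayN (t x : R) : decay t (- x) = decay t x.
Proof. by rewrite /decay sqrrN. Qed.

Lemma decay_le (t x : R) : 0 <= t -> 0 <= x ->
  decay t x <= 2 `^ t * ((1 + x) `^ (2 * t))^-1.
Proof.
move=> t_ge0 x_ge0.
have x2_ge0 := sqr_ge0 x.
have sqr_le : (1 + x) ^+ 2 <= 2 * (1 + x ^+ 2).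
  by have := sqr_ge0 (1 - x); rewrite !expr2; lra.
have A_gt0 : 0 < (1 + x ^+ 2) `^ t by apply: powR_gt0; lra.
have B_gt0 : 0 < (1 + x) `^ (2 * t) by apply: powR_gt0; lra.
rewrite /decay ler_pdivlMr // mulrC ler_pdivrMr // -powRM; [|lra|lra].
rewrite powRrM (powR_mulrn 2); last lra.
by apply: ge0_ler_powR; rewrite // nnegrE; lra.
Qed.

Definition decay_sum_const (t : R) := 2 * 2 `^ t * (1 + (2 * t - 1)^-1).

Lemma sum_decay_le (t L : R) (N : nat) : 1 <= L -> 2^-1 < t ->
  \sum_(j < N.+1 + N) decay t ((j%:Z - N%:Z)%:~R / L) <= decay_sum_const t * L.
Proof.
move=> L_ge1 t_gt.
have L_gt0 : 0 < L by lra.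
have v_gt0 : 0 < 2 * t - 1 by lra.
have two_t_gt0 : 0 < 2 `^ t by apply: powR_gt0.
apply: le_trans (@sum_sym_int_le _ (fun j => decay t (j%:~R / L)) N _ _) _.
- by move=> j; exact: decay_ge0.
- by move=> j; rewrite mulrNz mulNr decayN.
have half_sum :
    \sum_(m < N.+1) decay t (m%:R / L) <= 2 `^ t * (1 + L / (2 * t - 1)).
  apply: (@le_trans _ _
    (2 `^ t * \sum_(m < N.+1) ((1 + m%:R / L) `^ (2 * t - 1 + 1))^-1)).
    rewrite mulr_sumr; apply: ler_sum => m _; rewrite subrK.
    by apply: decay_le; [lra | rewrite divr_ge0 // ltW].
  by rewrite ler_pM2l // sum_powRV_le.
have L_bound : 1 + L / (2 * t - 1) <= (1 + (2 * t - 1)^-1) * L.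
  have : 0 < (2 * t - 1)^-1 by rewrite invr_gt0.
  rewrite mulrDl mul1r mulrC; nra.
rewrite /decay_sum_const -!mulrA ler_pM2l //.
by apply: le_trans half_sum _; rewrite ler_pM2l.
Qed.

Lemma decay_sum_const_gt0 (t : R) : 2^-1 < t -> 0 < decay_sum_const t.
Proof.
move=> t_gt; have : 0 < (2 * t - 1)^-1 by rewrite invr_gt0; lra.
by rewrite /decay_sum_const => ?; rewrite !mulr_gt0 ?powR_gt0 //; lra.
Qed.

Lemma decay_exponent_gt (d : nat) (tau : R) : (0 < d)%N -> tau < 4 - d%:R ->
  2^-1 < (2 - tau / 2) / d%:R.
Proof. by move=> d_gt0 tau_lt; rewrite ltr_pdivlMr ?ltr0n //; lra. Qed.

Lemma powRV_le_prod_decay (d : nat) (s : R) (x : 'I_d -> R) : 0 <= s ->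
  ((1 + \sum_(i < d) x i ^+ 2) `^ s)^-1 <= \prod_(i < d) decay (s / d%:R) (x i).
Proof.
case: d x => [|n] x s_ge0; first by rewrite !big_ord0 addr0 powR1 invr1.
set S := \sum_(i < n.+1) x i ^+ 2.
have S_ge0 : 0 <= S by apply: sumr_ge0 => i _; exact: sqr_ge0.
have t_ge0 : 0 <= s / n.+1%:R by rewrite divr_ge0.
apply: (@le_trans _ _ (\prod_(i < n.+1) ((1 + S) `^ (s / n.+1%:R))^-1)).
  rewrite prodr_const card_ord exprVn -powR_mulrn ?powR_ge0 //.
  by rewrite -powRrM mulfVK.
apply: ler_prod => i _; rewrite invr_ge0 powR_ge0 /=.
have xi_le : x i ^+ 2 <= S.
  by rewrite /S (bigD1 i) //= lerDl sumr_ge0 // => j _; exact: sqr_ge0.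
have xi_ge0 := sqr_ge0 (x i).
rewrite /decay lef_pV2 ?posrE ?powR_gt0 //; try lra.
by apply: ge0_ler_powR; rewrite ?nnegrE //; lra.
Qed.

Definition energy_const (E : R) := (3 + 2 * E) ^+ 2 + 4.

Lemma energy_const_le (E E' : R) :
  0 <= E -> E <= E' -> energy_const E <= energy_const E'.
Proof. by move=> E_ge0 EE'; rewrite /energy_const lerD2r ler_sqr ?nnegrE; lra. Qed.

Lemma sqr1D_le_energy (x E : R) : 0 <= x ->
  (1 + x) ^+ 2 <= energy_const E * ((x - E) ^+ 2 + 1).
Proof.
move=> x_ge0; rewrite /energy_const.
have := sqr_ge0 (x - E); have := sqr_ge0 (3 + 2 * E).
have [x_small|x_large] := lerP x (2 * E + 2).
- have : (1 + x) ^+ 2 <= (3 + 2 * E) ^+ 2 by rewrite ler_sqr ?nnegrE; lra.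
  nra.
- have : (1 + x) ^+ 2 <= (2 * (x - E)) ^+ 2 by rewrite ler_sqr ?nnegrE; lra.
  nra.
Qed.

Lemma addr1_le_eta (y eta : R) : 0 <= y -> 0 < eta ->
  y + 1 <= (1 + eta ^- 2) * (y + eta ^+ 2).
Proof.
move=> y_ge0 eta_gt0.
have etaVK : eta ^- 2 * eta ^+ 2 = 1 by rewrite mulVf // expf_neq0 // gt_eqF.
have : 0 <= eta ^- 2 * y by rewrite mulr_ge0 // invr_ge0 exprn_ge0 // ltW.
have := sqr_ge0 eta.
by rewrite mulrDl mul1r mulrDr etaVK; lra.
Qed.

Lemma integrand_le (d : nat) (L E eta tau : R) (k : {ffun 'I_d -> int}) :
  0 < eta ->
  integrand L E eta tau k <=
    energy_const E * (1 + eta ^- 2) * ((1 + latsq L k) `^ (2 - tau / 2))^-1.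
Proof.
move=> eta_gt0; rewrite /integrand.
have : 0 <= latsq L k by apply: sumr_ge0 => i _; exact: sqr_ge0.
move: (latsq L k) => x x_ge0.
have P_gt0 : 0 < (1 + x) `^ (tau / 2) by apply: powR_gt0; lra.
have Q_gt0 : 0 < (1 + x) `^ (2 - tau / 2) by apply: powR_gt0; lra.
have D_gt0 : 0 < (x - E) ^+ 2 + eta ^+ 2.
  by have := sqr_ge0 (x - E); have := exprn_gt0 2 eta_gt0; lra.
rewrite ler_pdivrMr // mulrAC ler_pdivlMr // -powRD; last first.
  by apply/implyP => _; rewrite gt_eqF //; lra.
rewrite addrCA subrr addr0 (powR_mulrn 2); last lra.
apply: le_trans (sqr1D_le_energy E x_ge0) _.
rewrite -mulrA ler_wpM2l ?addr1_le_eta ?sqr_ge0 //.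
by rewrite /energy_const; have := sqr_ge0 (3 + 2 * E); lra.
Qed.

Lemma sum_integrand_le (d : nat) (L E eta tau : R)
    (s : seq {ffun 'I_d -> int}) :
  tau < 4 - d%:R -> 1 <= L -> 0 < eta -> uniq s ->
  \sum_(k <- s) integrand L E eta tau k <=
    energy_const E * (1 + eta ^- 2) *
    (decay_sum_const ((2 - tau / 2) / d%:R) * L) ^+ d.
Proof.
move=> tau_lt L_ge1 eta_gt0 s_uniq.
set t := (2 - tau / 2) / d%:R.
have A_ge0 : 0 <= energy_const E * (1 + eta ^- 2).
  have : 0 <= eta ^- 2 by rewrite invr_ge0 exprn_ge0 // ltW.
  have := sqr_ge0 (3 + 2 * E).
  by rewrite /energy_const => *; rewrite mulr_ge0 //; lra.
apply: le_trans; first by apply: ler_sum => k _; exact: integrand_le.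
rewrite -mulr_sumr ler_wpM2l //.
apply: (@le_trans _ _ (\sum_(k <- s) \prod_(i < d) decay t ((k i)%:~R / L))).
  by apply: ler_sum => k _; apply: powRV_le_prod_decay; have := ler0n R d; lra.
have [N s_bounded] := seq_ffun_bounded s.
apply: le_trans (sum_prod_le_box (fun j => decay_ge0 t (j%:~R / L))
  s_uniq s_bounded) _.
have [->|d_gt0] := posnP d; first by rewrite !expr0.
have t_gt := decay_exponent_gt d_gt0 tau_lt.
apply: lerXn2r; rewrite ?nnegrE ?sum_decay_le //.
- by apply: sumr_ge0 => j _; exact: decay_ge0.
- by rewrite mulr_ge0 ?ltW ?decay_sum_const_gt0 //; lra.
Qed.

End DecaySums.

Lemma esum_le_sum_bound (R : realType) (T : choiceType) (f : T -> R) (B : R) :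
  (forall s : seq T, uniq s -> \sum_(k <- s) f k <= B) ->
  (\esum_(k in [set: T]) (f k)%:E <= B%:E)%E.
Proof.
move=> sum_le; apply: ge_ereal_sup => _ [X [X_fin _] <-].
by rewrite fsbig_finite //= sumEFin lee_fin sum_le // finmap.fset_uniq.
Qed.

Theorem lemma22 (R : realType) (d : nat) (hd : (d <= 3)%N) (tau : R)
    (htau0 : 0 <= tau) (htau1 : tau < 4 - d%:R) :
  exists C : R -> R,
    (forall a b : R, 0 < a -> a <= b ->
       exists M : R, forall E : R, a <= E -> E <= b -> C E <= M) /\
    (forall E L eta : R, 0 < E -> 1 <= L -> 0 < eta ->
       (lat_integral d L E eta tau <= (C E * (1 + eta ^- 2))%:E)%E).
Proof.
set t := (2 - tau / 2) / d%:R.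
set K := decay_sum_const t ^+ d.
have K_ge0 : 0 <= K.
  rewrite /K; have [->|d_gt0] := posnP d; first by rewrite expr0.
  by rewrite exprn_ge0 // ltW // decay_sum_const_gt0 // decay_exponent_gt.
exists (fun E => energy_const E * K); split.
  move=> a b a_gt0 ab; exists (energy_const b * K) => E aE Eb.
  by rewrite ler_wpM2r // energy_const_le //; lra.
move=> E L eta _ L_ge1 eta_gt0.
have Ld_gt0 : 0 < L ^+ d by rewrite exprn_gt0 //; lra.
have esum_le := esum_le_sum_bound
  (fun s s_uniq => sum_integrand_le E htau1 L_ge1 eta_gt0 s_uniq).
apply: le_trans (lee_wpmul2l _ esum_le) _; first by rewrite lee_fin invr_ge0 ltW.
rewrite -EFinM lee_fin.
suff -> : (L ^+ d)^-1 *
    (energy_const E * (1 + eta ^- 2) * (decay_sum_const t * L) ^+ d) =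
  energy_const E * K * (1 + eta ^- 2) by [].
by rewrite exprMn /K; field; rewrite !gt_eqF.
Qed.
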